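(* Let $n\ge2$ and let $Q$ be the $2n\times 2n$ matrix with entries given by $Q_{ij}=0$ if $i+j<2n+1$, $Q_{ij}=q^{n(n+e-3)-e}(q-1+\delta_{i+j,2n+1})q^j$ if $i+j\ge 2n+1$ and $j\le n$, and $Q_{ij}=q^{n(n+e-3)-e}\big((q-1+\delta_{i+j,2n+1})q^{j+e-1}+\delta_{ij}q^n(q^e-q)\big)$ if $i+j\ge2n+1$ and $j>n$ (the quotient matrix of the opposition graph on maximal flags of $\mathrm{PS}(n,e,q)$ with respect to types relative to a fixed point). For $i\in[n]$ let $$v_i=(\underbrace{0,\dots,0}_{n-i},\underbrace{q^{e+i-1},\dots,q^{e+i-1}}_{i},\underbrace{-1,\dots,-1}_{i},\underbrace{0,\dots,0}_{n-i})^\top.$$ Then $v_i$ is an eigenvector of $Q$ with eigenvalue $-q^{(n-1)(n-1+e)}$.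
   Context: $\delta$ is the Kronecker delta; $e$ is a real parameter (in applications $e\in\{0,\frac12,1,\frac32,2\}$) and $q$ a prime power. *)

From HB Require Import structures.
From mathcomp Require Import all_boot all_order all_algebra.
From mathcomp Require Import all_classical all_reals all_analysis.
Set Implicit Arguments. Unset Strict Implicit. Unset Printing Implicit Defensive.
Import Order.TTheory GRing.Theory Num.Theory.
Local Open Scope ring_scope.

Definition kdelta (R : realType) (a b : nat) : R := if a == b then 1 else 0.

Definition prime_power (q : nat) : Prop :=
  exists p k : nat, prime p /\ (0 < k)%N /\ q = (p ^ k)%N.

(* The 2n x 2n quotient matrix Q; row/column indices i, j : 'I_(n.*2) are
   0-based, the paper's 1-based indices are i.+1, j.+1. *)
Definition Qmat (R : realType) (n : nat) (e q : R) : 'M[R]_(n.*2) :=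
  \matrix_(i < n.*2, j < n.*2)
    let i1 := i.+1 in let j1 := j.+1 in
    let c : R := q `^ ((n%:R) * (n%:R + e - 3) - e) in
    let d : R := kdelta R (i1 + j1) (n.*2).+1 in
    if (i1 + j1 < (n.*2).+1)%N then 0
    else if (j1 <= n)%N then c * (q - 1 + d) * q ^+ j1
    else c * ((q - 1 + d) * q `^ (j1%:R + e - 1)
              + kdelta R i1 j1 * q ^+ n * (q `^ e - q)).

Definition vvec (R : realType) (n i : nat) (e q : R) : 'cV[R]_(n.*2) :=
  \col_(k0 < n.*2)
    let k := k0.+1 in
    if ((n - i < k) && (k <= n))%N then q `^ (e + i%:R - 1)
    else if ((n < k) && (k <= n + i))%N then -1
    else 0.

(** Divided by [c = q^(n(n+e-3)-e)], the entries of row [a] of [Q] are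
    discrete derivatives in the column index [b]: [Q_ab / c = P(b) - P(b-1)]
    with [P(b) = q^(b+1) [a+b > 2n]] for [b <= n] and
    [P(b) = q^(b+e) [a+b > 2n] + q^n (q^e - q) [a <= b]] for [b > n]; the
    Kronecker deltas are exactly the jumps of the indicators.  As [v_i] is
    constant on each of its two blocks of support, [(Q v_i)_a / c] collapses
    to four boundary values of [P], and comparing [a] with [n - i], [n] and
    [n + i] shows that they add up to [-q^(n+1) (v_i)_a]. *)
From HB Require Import structures.
From mathcomp Require Import all_boot all_order all_algebra.
From mathcomp Require Import all_classical all_reals all_analysis.
From mathcomp Require Import ring zify.
Import Order.TTheory GRing.Theory Num.Theory.
Set Implicit Arguments. Unset Strict Implicit. Unset Printing Implicit Defensive.
Local Open Scope ring_scope.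

Ltac case_ifs := repeat (case: ifP => ?; try (exfalso; lia)).

Section OppositionMatrix.

(* [T] and [x] stand for [q] and [q^e]; indices are 0-based. *)
Variables (R : comPzRingType) (T x : R) (n : nat).

Definition opp_entry (r j : nat) : R :=
  if (r + j.+1 < n.*2)%N then 0
  else if (j < n)%N then (T - 1 + (r + j.+1 == n.*2)%:R) * T ^+ j.+1
  else (T - 1 + (r + j.+1 == n.*2)%:R) * x * T ^+ j
       + (r == j)%:R * T ^+ n * (x - T).

Definition opp_mx : 'M[R]_(n.*2) := \matrix_(r, j) opp_entry r j.

Definition eigen_entry (i r : nat) : R :=
  if (n - i <= r < n)%N then x * T ^+ i.-1
  else if (n <= r < n + i)%N then -1
  else 0.

Definition eigen_vec (i : nat) : 'cV[R]_(n.*2) := \col_r eigen_entry i r.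

Definition left_potential (r j : nat) : R :=
  if (n.*2 <= r + j)%N then T ^+ j.+1 else 0.

Definition right_potential (r j : nat) : R :=
  (if (n.*2 <= r + j)%N then x * T ^+ j else 0)
  + (if (r < j)%N then T ^+ n * (x - T) else 0).

Lemma opp_entry_left (r j : nat) : (j < n)%N ->
  opp_entry r j = left_potential r j.+1 - left_potential r j.
Proof.
move=> jn; rewrite /opp_entry /left_potential.
by case: (r + j.+1 =P n.*2) => ? /=; case_ifs; rewrite ?mulr1n ?mulr0n ?exprS; ring.
Qed.

Lemma opp_entry_right (r j : nat) : (n <= j)%N ->
  opp_entry r j = right_potential r j.+1 - right_potential r j.
Proof.
move=> nj; rewrite /opp_entry /right_potential.
case: (r + j.+1 =P n.*2) => ? /=; case: (r =P j) => ? /=;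
  by case_ifs; rewrite ?mulr1n ?mulr0n ?exprS; ring.
Qed.

Lemma opp_row_eigen_sum (i r : nat) : (i <= n)%N ->
  \sum_(j < n.*2) opp_entry r j * eigen_entry i j
  = x * T ^+ i.-1 * (left_potential r n - left_potential r (n - i))
    - (right_potential r (n + i) - right_potential r n).
Proof.
move=> le_in.
rewrite -(big_mkord xpredT (fun j => opp_entry r j * eigen_entry i j)).
rewrite (big_cat_nat _ (n := n - i)) //=; last by lia.
rewrite (big_cat_nat _ (m := n - i) (n := n)) //=; [|lia|lia].
rewrite (big_cat_nat _ (m := n) (n := n + i)) //=; [|lia|lia].
have vanish m p : (p <= n - i)%N || (n + i <= m)%N ->
    \sum_(m <= j < p) opp_entry r j * eigen_entry i j = 0.
  move=> out; rewrite big_nat_cond big1 // => j /andP[/andP[lo hi] _].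
  by rewrite /eigen_entry; case_ifs; rewrite mulr0.
rewrite (vanish 0 (n - i))%N ?(vanish (n + i) n.*2)%N ?add0r ?addr0; [|lia|lia].
rewrite (telescope_sumr_eq (fun j => x * T ^+ i.-1 * left_potential r j)).
- rewrite (telescope_sumr_eq (fun j => - right_potential r j)) ?leq_addr //; first ring.
  move=> j /andP[lo hi]; rewrite opp_entry_right // /eigen_entry.
  by case_ifs; ring.
- exact: leq_subr.
- move=> j /andP[lo hi]; rewrite opp_entry_left // /eigen_entry.
  by case_ifs; ring.
Qed.

Lemma potential_balance (i r : nat) : (0 < i <= n)%N ->
  x * T ^+ i.-1 * (left_potential r n - left_potential r (n - i))
    - (right_potential r (n + i) - right_potential r n)
  = - T ^+ n.+1 * eigen_entry i r.
Proof.
case: i => [//|i] /andP[_ le_in].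
rewrite /left_potential /right_potential /eigen_entry /=.
have [m ->] : exists m, n = (m + i.+1)%N by exists (n - i.+1)%N; lia.
have -> : (m + i.+1 - i.+1 = m)%N by lia.
by case_ifs; rewrite ?(exprD, exprS); ring.
Qed.

Lemma opp_mx_eigen (i : nat) : (0 < i <= n)%N ->
  opp_mx *m eigen_vec i = - T ^+ n.+1 *: eigen_vec i.
Proof.
move=> i_range; apply/matrixP => r l; rewrite ord1 !mxE.
under eq_bigr => j _ do rewrite !mxE.
by rewrite opp_row_eigen_sum ?potential_balance //; case/andP: i_range.
Qed.

End OppositionMatrix.

Lemma eigen_vec_neq0 (R : comNzRingType) (T x : R) (n i : nat) : (0 < i <= n)%N ->
  eigen_vec T x n i != 0.
Proof.
move=> i_range; have n_lt : (n < n.*2)%N by lia.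
apply/eqP => /matrixP /(_ (Ordinal n_lt) ord0).
by rewrite !mxE /eigen_entry /=; case_ifs; move/eqP; rewrite oppr_eq0 oner_eq0.
Qed.

Lemma powRDn (R : realType) (q e : R) (k : nat) : 0 < q ->
  q `^ (e + k%:R) = q `^ e * q ^+ k.
Proof.
move=> q_gt0; rewrite powRD ?powR_mulrn ?ltW //.
by apply/implyP => _; rewrite gt_eqF.
Qed.

Lemma Qmat_opp_mx (R : realType) (n : nat) (e q : R) : 0 < q ->
  Qmat n e q = q `^ (n%:R * (n%:R + e - 3) - e) *: opp_mx q (q `^ e) n.
Proof.
move=> q_gt0; apply/matrixP => r j; rewrite !mxE /opp_entry /kdelta /=.
rewrite addSn ltnS !eqSS.
have -> : (j.+1)%:R + e - 1 = e + j%:R :> R by rewrite mulrS; ring.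
rewrite powRDn //; case: ifP => _; first by rewrite mulr0.
case: (r + j.+1 =P n.*2)%N => _; case: (r =P j :> nat) => _;
  by case: ifP => _; rewrite ?mulr1n ?mulr0n; ring.
Qed.

Lemma vvec_eigen_vec (R : realType) (n i : nat) (e q : R) : 0 < q -> (0 < i)%N ->
  vvec n i e q = eigen_vec q (q `^ e) n i.
Proof.
move=> q_gt0; case: i => [//|i] _; apply/matrixP => r l; rewrite !mxE /eigen_entry.
have -> : e + (i.+1)%:R - 1 = e + i%:R :> R by rewrite mulrS; ring.
by rewrite powRDn.
Qed.

Lemma powR_eigenvalue (R : realType) (n : nat) (e q : R) : 0 < q ->
  q `^ ((n%:R - 1) * (n%:R - 1 + e))
  = q `^ (n%:R * (n%:R + e - 3) - e) * q ^+ n.+1.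
Proof. by move=> q_gt0; rewrite -powRDn // mulrS; congr (_ `^ _); ring. Qed.

Theorem mainTheorem9 (R : realType) (n q : nat) (e : R) (i : nat) :
  (2 <= n)%N -> prime_power q -> (1 <= i <= n)%N ->
  vvec n i e (q%:R) != 0 /\
  Qmat n e (q%:R) *m vvec n i e (q%:R)
    = (- ((q%:R : R) `^ ((n%:R - 1) * (n%:R - 1 + e)))) *: vvec n i e (q%:R).
Proof.
move=> _ [p [k [p_prime [_ q_def]]]] i_range.
have q_gt0 : (0 : R) < q%:R by rewrite ltr0n q_def expn_gt0 prime_gt0.
have i_gt0 : (0 < i)%N by case/andP: i_range.
rewrite vvec_eigen_vec //.
split; first exact: eigen_vec_neq0.
by rewrite Qmat_opp_mx // -scalemxAl opp_mx_eigen // scalerA powR_eigenvalue // mulrN.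
Qed.
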